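(* Consider the multi-hop multi-channel network and Algorithm 1 described in the context, with parameter $\Delta_{est}\ge\Delta$, and assume $\delta\le\frac17$. Let $0<\epsilon<1$. Let $T_s$ be the time by which all nodes have started, and let $T_f$ be the earliest time by which each node has executed at least $\frac{48\max(2S,3\Delta_{est})}{\rho}\ln\!\left(\frac{N^2}{\epsilon}\right)$ full frames since $T_s$. Then with probability at least $1-\epsilon$, by time $T_f$ every node has discovered all its neighbors on all channels (i.e., for every link $v\to u$, $u$ has received a message from $v$).
   Context: Network: a finite set of $N$ nodes; each node $u$ has a nonempty available channel set $A_u$; $S=\max_u|A_u|$. Neighborhood on a channel is symmetric; all channels have identical propagation characteristics, so $u,v$ are neighbors on $c$ iff they are neighbors on some channel and $c\in A_u\cap A_v$. $\deg(u,c)$ is the number of neighbors of $u$ on $c$; $\Delta=\max_u\max_{c\in A_u}\deg(u,c)$. Each ordered pair of neighbors $(v,u)$ gives a link $v\to u$ with span $A_u\cap A_v$ and span-ratio $|A_u\cap A_v|/|A_u|$; $\rho$ is the minimum span-ratio over all links. A node operates on one channel at a time and cannot transmit and receive simultaneously; a node listening on $c$ throughout a real-time interval $I$ receives a message transmitted on $c$ during $I$ by a neighbor $v$ provided no other neighbor of it on $c$ transmits on $c$ at any time during $I$; no collision detection. Clocks: node $u$ has clock $C_u$ with $(1-\delta)\Delta t\le C_u(t+\Delta t)-C_u(t)\le(1+\delta)\Delta t$ for all real $t$, $\Delta t\ge0$; arbitrary offsets. Algorithm 1 (input: positive integer $\Delta_{est}$, an upper bound on $\Delta$ known to all nodes):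 each node starts at an arbitrary real time and partitions local time into consecutive frames of local length $L$, each split into three slots of local length $L/3$. At the start of each frame node $u$ picks $c$ uniformly at random from $A_u$; with probability $\min(\frac12,\frac{|A_u|}{3\Delta_{est}})$ it transmits on $c$ during each of the three slots a message with its identity and $A_u$, and otherwise listens on $c$ during the whole frame, recording each sender $v$ (with set $A$) as a neighbor with common channels $A\cap A_u$. Random choices are independent across frames and nodes. A full frame since $T_s$ is a frame starting at or after $T_s$. *)

From mathcomp Require Import all_boot all_order all_algebra.
From mathcomp Require Import boolp reals exp.
Set Implicit Arguments. Unset Strict Implicit. Unset Printing Implicit Defensive.
Import Order.TTheory GRing.Theory Num.Theory.
Local Open Scope ring_scope.

Section Network.
Variables (R : realType) (V C : finType).
(* A u : channels available at node u *)
Variable A : V -> {set C}.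
(* nb : the symmetric (propagation) neighborhood relation *)
Variable nb : rel V.

Definition nbc (u v : V) (c : C) : bool := [&& nb u v, c \in A u & c \in A v].

Definition link (v u : V) : bool := [exists c, nbc u v c].

Definition deg (u : V) (c : C) : nat := #|[set v | nbc u v c]|.

Definition Smax : nat := \max_(u : V) #|A u|.

Definition rho : R :=
  \big[Order.min/1]_(p : V * V | link p.1 p.2)
     ((#|A p.2 :&: A p.1|)%:R / (#|A p.2|)%:R).

(* transmission probability of node u in Algorithm 1 *)
Definition ptx (Dest : nat) (u : V) : R :=
  Order.min (1 / 2) ((#|A u|)%:R / (3 * Dest%:R)).

(* Timing: clocks Cl, start times s, frame length L (local time). *)
Variables (Cl : V -> R -> R) (s : V -> R) (L : R).

Definition inframe (u : V) (k : nat) (t : R) : Prop :=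
  s u <= t /\ Cl u (s u) + k%:R * L <= Cl u t < Cl u (s u) + k.+1%:R * L.

Definition inslot (u : V) (k j : nat) (t : R) : Prop :=
  s u <= t /\ Cl u (s u) + (3 * k + j)%:R * (L / 3) <= Cl u t
            < Cl u (s u) + (3 * k + j).+1%:R * (L / 3).

(* Random choices of the first K frames of every node: for (u,k),
   the chosen channel and whether u transmits (true) or listens (false). *)
Variable K : nat.
Definition outcome := {ffun V * 'I_K -> C * bool}.

Definition choice (w : outcome) (u : V) (k : nat) : option (C * bool) :=
  omap (fun i : 'I_K => w (u, i)) (insub k).

Definition weight (Dest : nat) (w : outcome) : R :=
  \prod_(x : V * 'I_K)
    ((if (w x).1 \in A x.1 then (#|A x.1|)%:R^-1 else 0) *
     (if (w x).2 then ptx Dest x.1 else 1 - ptx Dest x.1)).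

Definition Pr (Dest : nat) (E : outcome -> Prop) : R :=
  \sum_(w : outcome | `[< E w >]) weight Dest w.

Definition transmits (w : outcome) (u : V) (c : C) (t : R) : Prop :=
  exists k, inframe u k t /\ choice w u k = Some (c, true).

Definition listens (w : outcome) (u : V) (c : C) (t : R) : Prop :=
  exists k, inframe u k t /\ choice w u k = Some (c, false).

Definition received (w : outcome) (u v : V) (T : R) : Prop :=
  exists (k j : nat) (c : C),
    [/\ (j < 3)%N, choice w v k = Some (c, true), nbc u v c &
        (exists t, inslot v k j t)] /\
    [/\ (forall t, inslot v k j t -> t <= T),
        (forall t, inslot v k j t -> listens w u c t) &
        (forall x t, x != v -> nbc u x c -> inslot v k j t ->
                     ~ transmits w x c t)].

Definition all_discovered (w : outcome) (T : R) : Prop :=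
  forall u v, link v u -> received w u v T.

Definition full_frame_by (Ts : R) (u : V) (k : nat) (T : R) : Prop :=
  (exists t, inframe u k t) /\ (forall t, inframe u k t -> Ts <= t /\ t <= T).

Definition executed (Ts M : R) (u : V) (T : R) : Prop :=
  exists sq : seq nat, [/\ uniq sq, M <= (size sq)%:R &
                           forall k, k \in sq -> full_frame_by Ts u k T].

End Network.

(* Fix a link [v -> u] and a full frame of [v].  Clock rates differ by a
   factor of at most [4/3], so one of the first two slots of that frame lies
   inside a single frame of [u], and every node has at most two frames
   overlapping it.  [u] hears [v] in that slot if [v] transmits on a common
   channel [c] on which [u] listens while none of the at most [Dest - 1] other
   neighbours of [u] on [c] transmits on [c] in a frame overlapping the slot;
   this has probability at least [q = rho / (6 max(2S, 3 Dest))].  Frames of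
   [v] of equal parity are two frames apart, so their slots overlap disjoint
   sets of frames and these events are independent.  At least half of the [M]
   full frames of [v] have the same parity, so the link fails with probability
   at most [(1 - q)^(M/2) <= exp (- q M / 2) <= eps / N^2], and a union bound
   over the at most [N^2] links concludes. *)

From Pilot Require Import Defs.
From mathcomp Require Import all_boot all_order all_algebra.
From mathcomp Require Import boolp reals exp sequences.
From mathcomp Require Import lra ring zify.
Import Order.TTheory GRing.Theory Num.Theory.
Set Implicit Arguments. Unset Strict Implicit. Unset Printing Implicit Defensive.
Local Open Scope ring_scope.

Section ProductSpace.
Variables (R : realType) (V C : finType) (A : V -> {set C}) (K Dest : nat).
Hypothesis HA : forall u, A u != set0.

Local Notation I := (V * 'I_K)%type.
Local Notation outc := (outcome V C K).
Local Notation weight := (@weight R V C A K Dest).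
Local Notation Pr := (Pr R A Dest).

Definition mu (x : I) (j : C * bool) : R :=
  (if j.1 \in A x.1 then (#|A x.1|)%:R^-1 else 0) *
  (if j.2 then ptx R A Dest x.1 else 1 - ptx R A Dest x.1).

Definition Ex (f : outc -> R) : R := \sum_w f w * weight w.

Lemma ptx_ge0 u : 0 <= ptx R A Dest u.
Proof.
rewrite /ptx le_min; apply/andP; split; first lra.
by apply: divr_ge0; [exact: ler0n | apply: mulr_ge0; [lra | exact: ler0n]].
Qed.

Lemma ptx_le_half u : ptx R A Dest u <= 1 / 2.
Proof. by rewrite /ptx ge_min lexx. Qed.

Lemma mu_ge0 x j : 0 <= mu x j.
Proof.
apply: mulr_ge0; first by case: ifP => // _; rewrite invr_ge0.
have := ptx_ge0 x.1; have := ptx_le_half x.1; case: j.2 => /= *; lra.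
Qed.

Lemma sum_mu x : \sum_j mu x j = 1.
Proof.
rewrite -(pair_bigA _ (fun c b => mu x (c, b))) /=.
under eq_bigr => c _ do rewrite big_bool /mu /= -mulrDr addrC subrK mulr1.
rewrite -big_mkcond /= sumr_const -mulr_natr mul1r -(mulr_natr (#|A x.1|%:R^-1)).
by rewrite mulVf // pnatr_eq0 -lt0n card_gt0.
Qed.

Lemma weight_ge0 w : 0 <= weight w.
Proof. by apply: prodr_ge0 => x _; apply: mu_ge0. Qed.

Lemma sum_weight : \sum_w weight w = 1.
Proof.
transitivity (\prod_x \sum_j mu x j); first by rewrite bigA_distr_bigA.
by rewrite big1 // => x _; rewrite sum_mu.
Qed.

Lemma PrE (E : outc -> Prop) : Pr E = Ex (fun w => (`[< E w >] : bool)%:R).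
Proof.
rewrite /Pr /Ex big_mkcond /=; apply: eq_bigr => w _.
by case: ifP; rewrite ?mul1r ?mul0r.
Qed.

Lemma ler_Ex f g : (forall w, f w <= g w) -> Ex f <= Ex g.
Proof. by move=> fg; apply: ler_sum => w _; rewrite ler_wpM2r ?weight_ge0. Qed.

Lemma Ex_cst c : Ex (fun _ => c) = c.
Proof. by rewrite /Ex -mulr_sumr sum_weight mulr1. Qed.

Lemma ExB f g : Ex (fun w => f w - g w) = Ex f - Ex g.
Proof. by rewrite /Ex -sumrB; apply: eq_bigr => w _; rewrite mulrBl. Qed.

Lemma Ex_sum (T : finType) (P : pred T) (f : T -> outc -> R) :
  Ex (fun w => \sum_(i | P i) f i w) = \sum_(i | P i) Ex (f i).
Proof. by rewrite /Ex; under eq_bigr do rewrite mulr_suml; rewrite exchange_big. Qed.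

Lemma le_Pr (E F : outc -> Prop) : (forall w, E w -> F w) -> Pr E <= Pr F.
Proof.
move=> EF; rewrite !PrE; apply: ler_Ex => w.
by case: (asboolP (E w)) => [/EF/asboolT->|]; rewrite ?lexx ?ler0n.
Qed.

Lemma Pr_le1 (E : outc -> Prop) : Pr E <= 1.
Proof. by rewrite PrE -[X in _ <= X](Ex_cst 1); apply: ler_Ex => w; case: asboolP. Qed.

Lemma Pr_family (P : I -> pred (C * bool)) :
  Pr (fun w => forall x, w x \in P x) = \prod_x \sum_(j in P x) mu x j.
Proof.
rewrite bigA_distr_big_dep /Defs.Pr; apply: eq_bigl => w.
exact/asboolP/familyP.
Qed.

Lemma sum_Pr_disjoint_le (T : finType) (P : pred T) (E : T -> outc -> Prop)
    (F : outc -> Prop) :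
  (forall i w, P i -> E i w -> F w) ->
  (forall i j w, P i -> P j -> E i w -> E j w -> i = j) ->
  \sum_(i | P i) Pr (E i) <= Pr F.
Proof.
move=> EF Eunique; under eq_bigr do rewrite PrE.
rewrite -Ex_sum PrE; apply: ler_Ex => w.
have [[i [Pi Eiw]]|noE] := pselect (exists i, P i /\ E i w); last first.
  rewrite big1 ?ler0n // => j Pj; case: asboolP => // Ejw.
  by exfalso; apply: noE; exists j.
rewrite (bigD1 i) //= asboolT // big1 ?addr0 ?asboolT //; first exact: EF Eiw.
move=> j /andP[Pj ji]; case: asboolP => // Ejw.
by rewrite (Eunique _ _ _ Pj Pi Ejw Eiw) eqxx in ji.
Qed.

(* Swapping the coordinates outside [D] between two outcomes is a
   weight-preserving involution of pairs of outcomes. *)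
Lemma Ex_mul_indep (D : {set I}) (f g : outc -> R) :
  (forall w w' : outc, {in D, w =1 w'} -> f w = f w') ->
  (forall w w' : outc, {in [predC D], w =1 w'} -> g w = g w') ->
  Ex (fun w => f w * g w) = Ex f * Ex g.
Proof.
move=> fD gD; rewrite /Ex mulr_suml.
under [RHS]eq_bigr => w1 _ do rewrite mulr_sumr.
rewrite pair_bigA /=.
pose mix (w1 w2 : outc) : outc := [ffun x => if x \in D then w1 x else w2 x].
pose swap (p : outc * outc) := (mix p.1 p.2, mix p.2 p.1).
have swapK : involutive swap.
  by case=> w1 w2; congr pair; apply/ffunP => x; rewrite !ffunE; case: (x \in D).
rewrite (reindex_inj (inv_inj swapK)) /=; symmetry.
transitivity (\sum_(p : outc * outc) f p.1 * g p.1 * weight p.1 * weight p.2).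
  apply: eq_bigr => -[w1 w2] _ /=.
  have -> : f (mix w1 w2) = f w1 by apply: fD => x xD; rewrite ffunE xD.
  have -> : g (mix w2 w1) = g w1.
    by apply: gD => x; rewrite inE => /negPf xD; rewrite ffunE xD.
  have weightP : weight (mix w1 w2) * weight (mix w2 w1) = weight w1 * weight w2.
    rewrite -!big_split /=; apply: eq_bigr => x _; rewrite !ffunE.
    by case: (x \in D); rewrite // mulrC.
  by rewrite mulrACA weightP mulrA.
rewrite -(pair_bigA _ (fun w1 w2 => f w1 * g w1 * weight w1 * weight w2)) /=.
by apply: eq_bigr => w _; rewrite -mulr_sumr sum_weight mulr1.
Qed.

Lemma Ex_prod_indep (ks : seq nat) (D : nat -> {set I}) (f : nat -> outc -> R) :
  uniq ks ->
  (forall k, k \in ks -> forall w w' : outc, {in D k, w =1 w'} -> f k w = f k w') ->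
  {in ks &, forall k1 k2, k1 != k2 -> [disjoint D k1 & D k2]} ->
  Ex (fun w => \prod_(k <- ks) f k w) = \prod_(k <- ks) Ex (f k).
Proof.
elim: ks => [|k0 ks IH] /= => [_ _ _|/andP[k0ks uks] fD disD].
  by under eq_fun do rewrite big_nil; rewrite big_nil Ex_cst.
under eq_fun do rewrite big_cons.
have ksP k : k \in ks -> k \in k0 :: ks by rewrite inE => ->; rewrite orbT.
rewrite big_cons (Ex_mul_indep (D := D k0)).
- congr (_ * _); apply: IH => // [k /ksP|k1 k2 /ksP k1P /ksP k2P]; first exact: fD.
  exact: disD.
- by apply: fD; rewrite inE eqxx.
- move=> w w' ww'; apply: eq_big_seq => k kks; apply: fD; first exact: ksP.
  move=> x xDk; apply: ww'; rewrite inE; apply: contraTN xDk => xD0.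
  have k0k : k0 != k by apply: contraNneq k0ks => ->.
  by rewrite (disjointFr (disD _ _ (mem_head _ _) (ksP _ kks) k0k) xD0).
Qed.

Lemma Pr_none_indep (ks : seq nat) (D : nat -> {set I}) (E : nat -> outc -> Prop)
    (q : R) :
  uniq ks ->
  (forall k, k \in ks -> forall w w' : outc, {in D k, w =1 w'} -> E k w -> E k w') ->
  {in ks &, forall k1 k2, k1 != k2 -> [disjoint D k1 & D k2]} ->
  (forall k, k \in ks -> q <= Pr (E k)) ->
  Pr (fun w => forall k, k \in ks -> ~ E k w) <= (1 - q) ^+ size ks.
Proof.
move=> uks ED disD qE.
pose F k w : R := (~~ `[< E k w >] : bool)%:R.
have -> : Pr (fun w => forall k, k \in ks -> ~ E k w) = Ex (fun w => \prod_(k <- ks) F k w).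
  rewrite PrE; congr Ex; apply: funext => w.
  case: asboolP => [noE|/existsNP[k /not_implyP[kks /contrapT Ekw]]] /=.
    by rewrite big_seq big1 // => k kks; rewrite /F asboolF //; apply: noE.
  by rewrite (bigD1_seq k) //= /F asboolT // mul0r.
rewrite (@Ex_prod_indep _ D) //; last first.
  move=> k kks w w' ww'; rewrite /F; congr ((~~ _)%:R).
  by apply/asboolP/asboolP; apply: ED => // x xD; rewrite ww'.
rewrite -(count_predT ks) -iter_mulr_1 -big_const_seq.
rewrite !big_seq; apply: ler_prod => k kks.
have -> : Ex (F k) = 1 - Pr (E k).
  rewrite PrE -[X in X - _](Ex_cst 1) -ExB; congr Ex; apply: funext => w.
  by rewrite /F; case: asboolP; rewrite ?subr0 ?subrr.
by rewrite subr_ge0 Pr_le1 lerB ?qE.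
Qed.

Lemma Pr_union_bound (T : finType) (P : pred T) (E : T -> outc -> Prop) :
  1 - \sum_(i | P i) Pr (fun w => ~ E i w) <= Pr (fun w => forall i, P i -> E i w).
Proof.
under eq_bigr do rewrite PrE.
rewrite -Ex_sum -[X in X - _](Ex_cst 1) -ExB PrE.
apply: ler_Ex => w; case: asboolP => [_|] /=.
  by rewrite lerBlDr lerDl; apply: sumr_ge0 => i _; exact: ler0n.
move=> /existsNP[i /not_implyP[Pi notE]].
rewrite (bigD1 i) //= asboolT // lerBlDr add0r lerDl.
by apply: sumr_ge0 => j _; exact: ler0n.
Qed.

End ProductSpace.

Lemma Weierstrass_prod_ineq (R : realType) (T : Type) (r : seq T) (P : pred T)
    (a : T -> R) :
  (forall i, P i -> 0 <= a i <= 1) ->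
  1 - \sum_(i <- r | P i) a i <= \prod_(i <- r | P i) (1 - a i).
Proof.
move=> a01; elim: r => [|x r IH]; first by rewrite !big_nil subr0.
rewrite !big_cons; case: ifP => // Px.
have /andP[ax0 ax1] := a01 x Px.
have S0 : 0 <= \sum_(i <- r | P i) a i by apply: sumr_ge0 => i /a01 /andP[].
move: IH S0; set S := \sum_(_ <- _ | _) _; set Q := \prod_(_ <- _ | _) _ => IH S0.
have : (1 - a x) * (1 - S) <= (1 - a x) * Q by rewrite ler_wpM2l // subr_ge0.
have : 0 <= a x * S by rewrite mulr_ge0.
nra.
Qed.

Section Timing.
Variables (R : realType) (V : finType) (Cl : V -> R -> R) (delta : R)
          (s : V -> R) (L : R).
Hypothesis Hdelta : delta <= 1 / 7.
Hypothesis Hclock : forall u (t dt : R), 0 <= dt ->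
      (1 - delta) * dt <= Cl u (t + dt) - Cl u t <= (1 + delta) * dt.
Hypothesis HL : 0 < L.

(* [lra] ignores section hypotheses. *)
Local Ltac lra_delta := have := Hdelta; lra.
Local Ltac lra_L := have := HL; lra.

Lemma clock_diff_bounds y t t' : t <= t' ->
  (1 - delta) * (t' - t) <= Cl y t' - Cl y t <= (1 + delta) * (t' - t).
Proof.
by move=> tt'; have := @Hclock y t (t' - t); rewrite subr_ge0 tt' addrCA subrr addr0; apply.
Qed.

Lemma clock_lt_homo y : {homo Cl y : t t' / t < t'}.
Proof.
move=> t t' tt'; have /andP[lb _] := clock_diff_bounds y (ltW tt').
have : 0 < (1 - delta) * (t' - t) by rewrite mulr_gt0 ?subr_gt0 //; lra_delta.
lra_delta.
Qed.

Lemma clock_ler_mono y : {mono Cl y : t t' / t <= t'}.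
Proof. exact/le_mono/clock_lt_homo. Qed.

(* Since [delta <= 1/7], the ratio [(1 + delta) / (1 - delta)] is at most [4/3]. *)
Lemma clock_rate_ratio y z t t' : t <= t' ->
  Cl z t' - Cl z t <= 4 / 3 * (Cl y t' - Cl y t) /\
  3 / 4 * (Cl y t' - Cl y t) <= Cl z t' - Cl z t.
Proof.
move=> tt'; have /andP[y1 y2] := clock_diff_bounds y tt'.
have /andP[z1 z2] := clock_diff_bounds z tt'.
have dt0 : 0 <= t' - t by rewrite subr_ge0.
have r1 : (1 + delta) * (t' - t) <= 4 / 3 * ((1 - delta) * (t' - t)).
  by rewrite mulrA -subr_ge0 -mulrBl mulr_ge0 //; lra_delta.
have r2 : 3 / 4 * ((1 + delta) * (t' - t)) <= (1 - delta) * (t' - t).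
  by rewrite mulrA -subr_ge0 -mulrBl mulr_ge0 //; lra_delta.
split; lra_delta.
Qed.

(* Clocks need not be continuous, but they advance by less than [eta] over
   any real interval of length [eta / 2]; the first point of the grid
   [tb + n * eta / 2] at which [Cl y] has reached [X] does the job. *)
Lemma clock_hits_interval y (X eta : R) : 0 < eta ->
  exists t, X <= Cl y t < X + eta.
Proof.
move=> eta0; set d := 2 * `|Cl y 0 - X| + 1; set tb := - d.
have d0 : 0 <= d by rewrite /d; have := normr_ge0 (Cl y 0 - X); lra.
have tbX : Cl y tb < X.
  have tb0 : tb <= 0 by rewrite /tb; lra.
  have /andP[lb _] := clock_diff_bounds y tb0.
  have : (1 - delta) * (0 - tb) >= 6 / 7 * d.
    by rewrite /tb sub0r opprK ler_wpM2r //; lra_delta.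
  have : Cl y 0 - X < 6 / 7 * d.
    by rewrite /d; have := ler_norm (Cl y 0 - X); have := normr_ge0 (Cl y 0 - X); lra.
  lra.
set h := eta / 2; have h0 : 0 < h by rewrite /h; lra.
pose P n := X <= Cl y (tb + n%:R * h).
have exP : exists n, P n.
  have dh0 : 0 < (1 - delta) * h by rewrite mulr_gt0 //; lra_delta.
  set q := (X - Cl y tb) / ((1 - delta) * h).
  have q0 : 0 <= q by rewrite /q divr_ge0 //; [lra | exact: ltW].
  set n := Num.Def.archi_bound q; exists n; rewrite /P.
  have tbn : tb <= tb + n%:R * h by rewrite lerDl mulr_ge0 //; exact: ltW.
  have /andP[lb _] := clock_diff_bounds y tbn.
  rewrite addrAC subrr add0r in lb.
  have : X - Cl y tb <= (1 - delta) * (n%:R * h).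
    by rewrite mulrCA -ler_pdivrMr //; exact/ltW/archi_boundP.
  lra.
case: (ex_minnP exP) => -[|m] Pn nmin; first by move: Pn; rewrite /P mul0r addr0; lra.
exists (tb + m.+1%:R * h); apply/andP; split => //.
have : ~~ P m by apply/negP => /nmin; rewrite ltnn.
rewrite /P -ltNge -natr1 mulrDl mul1r addrA => PmF.
have tbm : tb + m%:R * h <= tb + m%:R * h + h by lra.
have /andP[_ ub] := clock_diff_bounds y tbm.
move: ub; rewrite [X in (1 + delta) * X]addrAC subrr add0r.
have : (1 + delta) * h < eta by rewrite /h; have := Hdelta; nra.
lra_delta.
Qed.

Local Notation ell y t := (Cl y t - Cl y (s y)).

Lemma inframeE y a t : inframe Cl s L y a t <->
  [/\ s y <= t, a%:R * L <= ell y t & ell y t < a%:R * L + L].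
Proof.
rewrite /inframe -natr1 mulrDl mul1r; split.
  by case=> sy /andP[lb ub]; split => //; lra.
by case=> sy lb ub; split => //; apply/andP; split; lra.
Qed.

Lemma inslotE y k j t : inslot Cl s L y k j t <->
  [/\ s y <= t, k%:R * L + j%:R * (L / 3) <= ell y t &
      ell y t < k%:R * L + j%:R * (L / 3) + L / 3].
Proof.
have e : (3 * k + j)%:R * (L / 3) = k%:R * L + j%:R * (L / 3).
  by rewrite natrD natrM; field.
have e1 : (3 * k + j).+1%:R * (L / 3) = k%:R * L + j%:R * (L / 3) + L / 3.
  by rewrite -natr1 mulrDl e mul1r.
rewrite /inslot e e1; split.
  by case=> sy /andP[lb ub]; split => //; lra.
by case=> sy lb ub; split => //; apply/andP; split; lra.
Qed.

Lemma inframe_exists y t : s y <= t -> exists a, inframe Cl s L y a t.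
Proof.
move=> syt; have ell0 : 0 <= ell y t by rewrite subr_ge0 clock_ler_mono.
have /andP[lb ub] := truncn_itv (divr_ge0 ell0 (ltW HL)).
exists (Num.truncn (ell y t / L)); apply/inframeE; split => //.
  by rewrite -ler_pdivlMr.
by move: ub; rewrite ltr_pdivrMr // -natr1 mulrDl mul1r.
Qed.

Lemma inslot_exists v k j : exists t, inslot Cl s L v k j t.
Proof.
have [|t /andP[lb ub]] := @clock_hits_interval v
  (Cl v (s v) + (k%:R * L + j%:R * (L / 3))) (L / 3); first lra_L.
have : 0 <= k%:R * L + j%:R * (L / 3) :> R by rewrite addr_ge0 ?mulr_ge0 //; lra_L.
exists t; apply/inslotE; split; last 2 first; try lra_L.
by rewrite -(clock_ler_mono v); lra_L.
Qed.

Lemma inslot_inframe y k j t : (j < 3)%N ->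
  inslot Cl s L y k j t -> inframe Cl s L y k t.
Proof.
have L3 : 0 <= L / 3 by have := HL; lra.
move=> j3 /inslotE[sy lb ub]; apply/inframeE; split => //.
  have : 0 <= j%:R * (L / 3) :> R by rewrite mulr_ge0.
  lra.
have : j%:R * (L / 3) <= 2 * (L / 3) :> R by rewrite ler_wpM2r // ler_nat -ltnS.
lra.
Qed.

Lemma inslot_clock_spread v k j z t1 t2 :
  inslot Cl s L v k j t1 -> inslot Cl s L v k j t2 ->
  Cl z t2 - Cl z t1 < 4 / 9 * L.
Proof.
move=> /inslotE[_ a1 a2] /inslotE[_ b1 b2].
case: (lerP t1 t2) => t12; last by have := clock_lt_homo z t12; lra_L.
by have [+ _] := clock_rate_ratio v z t12; lra_L.
Qed.

Lemma inframe_inslot_close v k j x b1 b2 t1 t2 :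
  inslot Cl s L v k j t1 -> inframe Cl s L x b1 t1 ->
  inslot Cl s L v k j t2 -> inframe Cl s L x b2 t2 -> (b2 <= b1.+1)%N.
Proof.
move=> s1 /inframeE[_ f1 f2] s2 /inframeE[_ g1 g2].
have spread := inslot_clock_spread x s1 s2.
have : b2%:R * L < (b1 + 2)%:R * L :> R by rewrite natrD; lra_L.
by rewrite ltr_pM2r // ltr_nat addn2 ltnS.
Qed.

(* Slots 0 and 1 of frame [k1] precede every slot of frame [k1 + 2] by at
   least [4/3] local frames of [v], hence by at least one frame of any [y]. *)
Lemma inslot_two_apart_inframe v k1 j1 k2 j2 y b t1 t2 :
  (k1 + 2 <= k2)%N -> (j1 < 2)%N ->
  inslot Cl s L v k1 j1 t1 -> inframe Cl s L y b t1 ->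
  inslot Cl s L v k2 j2 t2 -> inframe Cl s L y b t2 -> False.
Proof.
move=> k12 j12 /inslotE[_ a1 a2] /inframeE[_ f1 f2] /inslotE[_ b1 b2]
  /inframeE[_ g1 g2].
have : (k1 + 2)%:R * L <= k2%:R * L :> R by rewrite ler_pM2r // ler_nat.
have L3 : 0 <= L / 3 by have := HL; lra.
have : j1%:R * (L / 3) <= 1 * (L / 3) :> R by rewrite ler_wpM2r // lern1.
have : 0 <= j2%:R * (L / 3) :> R by rewrite mulr_ge0.
rewrite natrD => j20 j1le k2ge.
have t12 : t1 <= t2 by rewrite -(clock_ler_mono v); lra_L.
by have [_] := clock_rate_ratio v y t12; lra_L.
Qed.

(* Every point of slot [j + 1] comes after [t'] and less than [8/9] of a
   frame of [u] after [t'']. *)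
Lemma inslot_succ_inframe v k j u b t' t'' :
  (forall t, inslot Cl s L v k j.+1 t -> s u <= t) ->
  inslot Cl s L v k j t' -> inslot Cl s L v k j t'' ->
  b%:R * L <= ell u t' -> ell u t'' <= b%:R * L ->
  forall t, inslot Cl s L v k j.+1 t -> inframe Cl s L u b t.
Proof.
move=> started /inslotE[_ _ t'1] /inslotE[_ t''0 t''1] b't b''t t tslot.
have /inslotE[_ t0 t1] := tslot; rewrite -[j.+1%:R]natr1 mulrDl mul1r in t0 t1.
apply/inframeE; split; first exact: started.
  have : t' <= t by rewrite -(clock_ler_mono v); lra.
  by rewrite -(clock_ler_mono u); lra.
have t''t : t'' <= t by rewrite -(clock_ler_mono v); lra.
by have [+ _] := clock_rate_ratio v u t''t; lra_L.
Qed.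

(* Slot 0 of frame [k] of [v] meets at most two consecutive frames of [u];
   if it is not inside one, slot 1 is. *)
Lemma inslot_within_inframe v u k :
  (forall j t, (j < 2)%N -> inslot Cl s L v k j t -> s u <= t) ->
  exists j a, [/\ (j < 2)%N, exists t, inslot Cl s L v k j t &
                forall t, inslot Cl s L v k j t -> inframe Cl s L u a t].
Proof.
move=> started; have started1 t := started 1%N t isT.
have [r0 r0slot] := inslot_exists v k 0; have [r1 r1slot] := inslot_exists v k 1.
have [a /[dup] r0a /inframeE[_ r0a1 r0a2]] := inframe_exists (started 0%N r0 isT r0slot).
have [in_a|/existsNP[t1 /not_implyP[t1slot t1a]]] :=
  pselect (forall t, inslot Cl s L v k 0 t -> inframe Cl s L u a t).
  by exists 0%N, a; split => //; exists r0.
have [before|after] := ltrP (ell u t1) (a%:R * L).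
  exists 1%N, a; split => //; first by exists r1.
  by apply: (inslot_succ_inframe started1 r0slot t1slot) => //; apply: ltW.
have {}after : a.+1%:R * L <= ell u t1.
  rewrite -natr1 mulrDl mul1r leNgt; apply/negP => t1a1; apply: t1a.
  by apply/inframeE; split => //; exact: (started 0%N).
exists 1%N, a.+1; split => //; first by exists r1.
apply: (inslot_succ_inframe started1 t1slot r0slot) => //.
by rewrite -natr1 mulrDl mul1r; apply: ltW.
Qed.

End Timing.

Section Discovery.
Variables (R : realType) (V C : finType) (A : V -> {set C}) (nb : rel V)
  (Dest : nat) (delta : R) (Cl : V -> R -> R) (s : V -> R) (L : R) (K : nat).
Hypothesis HA : forall u, A u != set0.
Hypothesis Hirr : forall u, ~~ nb u u.
Hypothesis HDest : (0 < Dest)%N.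
Hypothesis HDelta : forall u c, c \in A u -> (deg A nb u c <= Dest)%N.
Hypothesis Hdelta : delta <= 1 / 7.
Hypothesis Hclock : forall u (t dt : R), 0 <= dt ->
      (1 - delta) * dt <= Cl u (t + dt) - Cl u t <= (1 + delta) * dt.
Hypothesis HL : 0 < L.

Local Notation outc := (outcome V C K).
Local Notation I := (V * 'I_K)%type.
Local Notation Pr := (Pr R A Dest).
Local Notation mu := (mu R A Dest).
Local Notation inframe := (inframe Cl s L).
Local Notation inslot := (inslot Cl s L).

Definition slot_frames v k j : {set I} :=
  [set xb : I | `[< exists t, inslot v k j t /\ inframe xb.1 (val xb.2) t >]].

Definition interferer u v (D : {set I}) c (xb : I) : bool :=
  [&& xb \in D, xb.1 != v & nbc A nb u xb.1 c].

Definition success u v (ok oa : 'I_K) (D : {set I}) (w : outc) : Prop :=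
  [/\ (w (v, ok)).2, nbc A nb u v (w (v, ok)).1, w (u, oa) = ((w (v, ok)).1, false) &
      forall xb, interferer u v D (w (v, ok)).1 xb -> w xb != ((w (v, ok)).1, true)].

Lemma choiceE (w : outc) y (o : 'I_K) : Defs.choice w y o = Some (w (y, o)).
Proof. by rewrite /Defs.choice valK. Qed.

Lemma choiceP (w : outc) y k p : Defs.choice w y k = Some p ->
  exists o : 'I_K, val o = k /\ w (y, o) = p.
Proof. by rewrite /Defs.choice; case: insubP => [o _ <- [<-]|//]; exists o. Qed.

Lemma success_received u v k j (ok oa : 'I_K) Tf (w : outc) :
  val ok = k -> (j < 3)%N -> (exists t, inslot v k j t) ->
  (forall t, inslot v k j t -> t <= Tf) ->
  (forall t, inslot v k j t -> inframe u oa t) ->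
  success u v ok oa (slot_frames v k j) w -> received A nb Cl s L w u v Tf.
Proof.
move=> <- j3 slot_ne slotTf slot_oa [vtx uvc ulisten silent].
set c := (w (v, ok)).1 in uvc ulisten silent.
exists (val ok), j, c; split; split => //.
- by rewrite choiceE; move: vtx; rewrite /c; case: (w (v, ok)) => ? [].
- by move=> t tslot; exists oa; rewrite choiceE ulisten; split => //; apply: slot_oa.
move=> x t xv uxc tslot [b [xb /choiceP[o [ob wo]]]]; subst b.
have : interferer u v (slot_frames v ok j) c (x, o).
  by apply/and3P; split => //; rewrite inE; apply/asboolP; exists t.
by move/silent; rewrite wo eqxx.
Qed.

Lemma success_local u v (ok oa : 'I_K) (D : {set I}) (w w' : outc) :
  (v, ok) \in D -> (u, oa) \in D -> {in D, w =1 w'} ->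
  success u v ok oa D w -> success u v ok oa D w'.
Proof.
move=> vD uD ww' [? ? ? silent]; rewrite /success -!ww' //; split => // xb xbI.
by rewrite -ww'; [exact: silent | case/and3P: xbI].
Qed.

Lemma card_interferers u v (D : {set I}) c :
  c \in A u -> nbc A nb u v c ->
  (forall x, #|[set b : 'I_K | (x, b) \in D]| <= 2)%N ->
  (#|[pred xb | interferer u v D c xb]| <= 2 * (Dest - 1))%N.
Proof.
move=> cAu uvc D2; rewrite -sum1_card.
have -> : (\sum_(xb in [pred xb | interferer u v D c xb]) 1 =
           \sum_x \sum_(b | interferer u v D c (x, b)) 1)%N.
  by rewrite pair_big_dep; apply: eq_bigl => -[x b].
apply: (@leq_trans (\sum_(x | (x != v) && nbc A nb u x c) 2)%N).
  rewrite [X in (_ <= X)%N]big_mkcond /=; apply: leq_sum => x _.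
  case: ifP => xI; last first.
    by rewrite big_pred0 // => b; rewrite /interferer /= xI andbF.
  rewrite (eq_bigl (fun b => (x, b) \in D)); last by move=> b; rewrite /interferer xI andbT.
  by rewrite sum1_card (leq_trans _ (D2 x)) // subset_leq_card //; apply/subsetP => b; rewrite inE.
rewrite sum_nat_const.
have := HDelta cAu; rewrite /deg (cardsD1 v) inE uvc.
have -> : #|[pred x | (x != v) && nbc A nb u x c]| = #|[set x | nbc A nb u x c] :\ v|.
  by apply: eq_card => x; rewrite !inE.
lia.
Qed.

Lemma card_slot_frames v k j x : (#|[set b : 'I_K | (x, b) \in slot_frames v k j]| <= 2)%N.
Proof.
set B := [set b | _].
have close b1 b2 : b1 \in B -> b2 \in B -> (val b2 <= (val b1).+1)%N.
  rewrite !inE => /asboolP [t1 [s1 f1]] /asboolP [t2 [s2 f2]].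
  exact: (inframe_inslot_close Hdelta Hclock HL s1 f1 s2 f2).
have [->|[b0 b0B]] := set_0Vmem B; first by rewrite cards0.
have [bm bmB bm_max] := arg_maxnP (fun i : 'I_K => val i) b0B.
pose bm' : 'I_K := insubd bm (val bm).-1.
have : B \subset [set bm; bm'].
  apply/subsetP => b bB; rewrite !inE.
  have bbm : (val b <= val bm)%N := bm_max b bB; have bmb := close b bm bB bmB.
  have [/val_inj->|/eqP bneq] := eqVneq (val b) (val bm); first by rewrite eqxx.
  apply/orP; right; apply/eqP/val_inj; rewrite val_insubd.
  rewrite (leq_ltn_trans (leq_pred _) (ltn_ord bm)).
  by have -> : val bm = (val b).+1 by lia.
by move/subset_leq_card; rewrite cards2 => /leq_trans; apply; case: (bm != bm').
Qed.

Definition maxSD : R := Num.max (2 * (Smax A)%:R) (3 * Dest%:R).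

Lemma maxSD_ge : 3 * Dest%:R <= maxSD.
Proof. by rewrite /maxSD le_max lexx orbT. Qed.

Lemma maxSD_gt0 : 0 < maxSD.
Proof. by apply: lt_le_trans maxSD_ge; rewrite mulr_gt0 ?ltr0n. Qed.

Lemma cardA_gt0 y : 0 < #|A y|%:R :> R.
Proof. by rewrite ltr0n card_gt0. Qed.

Lemma ptx_ge y : #|A y|%:R / maxSD <= ptx R A Dest y.
Proof.
have maxSD0 := maxSD_gt0; have A0 := cardA_gt0 y.
rewrite /ptx le_min; apply/andP; split.
  have : #|A y|%:R <= (Smax A)%:R :> R.
    by rewrite ler_nat; apply: (@leq_bigmax V (fun u => #|A u|) y).
  have : 2 * (Smax A)%:R <= maxSD by rewrite /maxSD le_max lexx.
  by rewrite ler_pdivrMr //; lra.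
rewrite ler_pdivrMr // mulrAC ler_pdivlMr; last by rewrite mulr_gt0 ?ltr0n.
by rewrite ler_wpM2l ?maxSD_ge // ltW.
Qed.

Lemma mu_transmit_ge y (o : 'I_K) c : c \in A y -> 1 / maxSD <= mu (y, o) (c, true).
Proof.
move=> cAy; have A0 := cardA_gt0 y; rewrite /mu /= cAy.
apply: le_trans (ler_wpM2l _ (ptx_ge y)); last by rewrite invr_ge0 ltW.
by rewrite mulrA mulVf ?mul1r // lt0r_neq0.
Qed.

Lemma mu_listen_ge y (o : 'I_K) c : c \in A y -> #|A y|%:R^-1 / 2 <= mu (y, o) (c, false).
Proof.
move=> cAy; rewrite /mu /= cAy ler_wpM2l ?invr_ge0 ?ler0n //.
by have := @ptx_le_half R V C A Dest y; lra.
Qed.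

Lemma mu_transmit_le (x : I) c : mu x (c, true) <= 1 / (3 * Dest%:R).
Proof.
have D0 : 0 < 3 * Dest%:R :> R by rewrite mulr_gt0 ?ltr0n.
rewrite /mu /=; case: ifP => _; last by rewrite mul0r divr_ge0 // ltW.
have A0 := cardA_gt0 x.1; have Ai0 : 0 <= #|A x.1|%:R^-1 :> R by rewrite invr_ge0 ltW.
have : ptx R A Dest x.1 <= #|A x.1|%:R / (3 * Dest%:R) by rewrite /ptx ge_min lexx orbT.
by move/(ler_wpM2l Ai0); rewrite mulrA mulVf ?mul1r // lt0r_neq0.
Qed.

Section SuccessProbability.
Variables (u v : V) (ok oa : 'I_K) (D : {set I}).
Hypothesis uv : link A nb v u.
Hypothesis D2 : forall x, (#|[set b : 'I_K | (x, b) \in D]| <= 2)%N.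

(* A product event contained in [success] on channel [c]; for distinct [c]
   these events are disjoint. *)
Definition success_pattern c (xb : I) : pred (C * bool) :=
  if interferer u v D c xb then predC1 (c, true)
  else if xb == (v, ok) then pred1 (c, true)
  else if xb == (u, oa) then pred1 (c, false) else predT.

Lemma not_interferer_v c : ~~ interferer u v D c (v, ok).
Proof. by rewrite /interferer /= eqxx andbF. Qed.

Lemma not_interferer_u c : ~~ interferer u v D c (u, oa).
Proof. by rewrite /interferer /nbc /= (negPf (Hirr u)) !andbF. Qed.

Lemma vok_neq_uoa : (v, ok) != (u, oa).
Proof.
case/existsP: uv => c /and3P[uv' _ _].
by apply: contraTneq uv' => -[->]; rewrite Hirr.
Qed.

Lemma success_pattern_v c : success_pattern c (v, ok) = pred1 (c, true).
Proof. by rewrite /success_pattern (negPf (not_interferer_v c)) eqxx. Qed.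

Lemma success_pattern_u c : success_pattern c (u, oa) = pred1 (c, false).
Proof.
by rewrite /success_pattern (negPf (not_interferer_u c)) eq_sym (negPf vok_neq_uoa) eqxx.
Qed.

Lemma success_patternP c (w : outc) : nbc A nb u v c ->
  (forall xb, w xb \in success_pattern c xb) -> success u v ok oa D w.
Proof.
move=> uvc wP; have := wP (v, ok); have := wP (u, oa).
rewrite success_pattern_v success_pattern_u !inE => /eqP wu /eqP wv.
rewrite /success wv wu; split => // xb xbI.
by have := wP xb; rewrite /success_pattern xbI inE.
Qed.

(* At most [2 (Dest - 1)] interfering frames, each transmitting on [c] with
   probability at most [1 / (3 Dest)]. *)
Lemma silence_ge c : c \in A u -> nbc A nb u v c ->
  1 / 3 <= \prod_(x | interferer u v D c x) (1 - mu x (c, true)).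
Proof.
move=> cAu uvc.
have mu01 x : interferer u v D c x -> 0 <= mu x (c, true) <= 1.
  move=> _; rewrite mu_ge0 /= (le_trans (mu_transmit_le x c)) //.
  have : 1 <= Dest%:R :> R by rewrite ler1n.
  by rewrite ler_pdivrMr ?mulr_gt0 ?ltr0n //; lra.
apply: le_trans (Weierstrass_prod_ineq (index_enum _) mu01).
have : \sum_(x <- index_enum _ | interferer u v D c x) mu x (c, true) <=
       #|[pred x | interferer u v D c x]|%:R * (1 / (3 * Dest%:R)).
  by rewrite mulr_natl -sumr_const; apply: ler_sum => x _; exact: mu_transmit_le.
have : #|[pred x | interferer u v D c x]|%:R <= 2 * Dest%:R :> R.
  by rewrite -natrM ler_nat (leq_trans (card_interferers cAu uvc D2)) //; lia.
have D0 : 0 < Dest%:R :> R by rewrite ltr0n.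
move=> card_le sum_le.
have : #|[pred x | interferer u v D c x]|%:R * (1 / (3 * Dest%:R)) <= 2 / 3 :> R.
  by rewrite mul1r ler_pdivrMr; [lra | rewrite mulr_gt0].
lra.
Qed.

Lemma Pr_success_pattern_ge c : nbc A nb u v c ->
  #|A u|%:R^-1 / (6 * maxSD) <= Pr (fun w => forall xb, w xb \in success_pattern c xb).
Proof.
move=> /[dup] uvc /and3P[_ cAu cAv]; rewrite Pr_family (bigID (interferer u v D c)) /=.
have -> : \prod_(x | interferer u v D c x) \sum_(j in success_pattern c x) mu x j =
          \prod_(x | interferer u v D c x) (1 - mu x (c, true)).
  apply: eq_bigr => x xI; rewrite /success_pattern xI.
  rewrite -(sum_mu R Dest HA x) [X in _ = X - _](bigD1 (c, true)) //= addrAC subrr add0r.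
  by apply: eq_bigl => j; rewrite inE.
have -> : \prod_(x | ~~ interferer u v D c x) \sum_(j in success_pattern c x) mu x j =
          mu (v, ok) (c, true) * mu (u, oa) (c, false).
  rewrite (bigD1 (v, ok)) ?not_interferer_v //= (bigD1 (u, oa)) /=; last first.
    by rewrite not_interferer_u eq_sym vok_neq_uoa.
  rewrite success_pattern_v success_pattern_u !big_pred1_eq.
  rewrite big1 ?mulr1 // => x /andP[/andP[xI xv] xu].
  rewrite /success_pattern (negPf xI) (negPf xv) (negPf xu) -(sum_mu R Dest HA x).
  by apply: eq_bigl => j; rewrite inE.
have maxSD0 := maxSD_gt0; have A0 := cardA_gt0 u.
have -> : #|A u|%:R^-1 / (6 * maxSD) = 1 / 3 * (1 / maxSD * (#|A u|%:R^-1 / 2)) :> R.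
  by field; rewrite !lt0r_neq0.
have Ai2 : 0 <= #|A u|%:R^-1 / 2 :> R by rewrite divr_ge0 // invr_ge0 ltW.
have maxSDi : 0 <= 1 / maxSD by rewrite divr_ge0 // ltW.
apply: ler_pM; [lra | exact: mulr_ge0 | exact: silence_ge |].
by apply: ler_pM => //; [exact: mu_transmit_ge | exact: mu_listen_ge].
Qed.

Lemma Pr_success_ge : rho R A nb / (6 * maxSD) <= Pr (success u v ok oa D).
Proof.
have uvnb : nb u v by case/existsP: uv => c /and3P[].
pose E c (w : outc) := forall xb, w xb \in success_pattern c xb.
apply: le_trans (sum_Pr_disjoint_le R A Dest (P := nbc A nb u v) (E := E) _ _); last 2 first.
- by move=> c w uvc; apply: success_patternP.
- move=> c c' w _ _ /(_ (v, ok)) + /(_ (v, ok)).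
  by rewrite !success_pattern_v !inE => /eqP-> /eqP[].
apply: le_trans (ler_sum _ (fun c => @Pr_success_pattern_ge c)).
rewrite sumr_const -(mulr_natl (_ / (6 * maxSD))) mulrA.
apply: ler_wpM2r; first by rewrite invr_ge0 mulr_ge0 // ltW // maxSD_gt0.
have -> : #|[pred c | nbc A nb u v c]| = #|A u :&: A v|.
  by apply: eq_card => c; rewrite !inE /nbc uvnb.
exact: (@bigmin_le_cond _ _ _ 1 (v, u)).
Qed.

End SuccessProbability.

Lemma full_frame_good_slot u v k Ts Tf :
  (forall y, s y <= Ts) ->
  (forall y k t, inframe y k t -> t <= Tf -> (k < K)%N) ->
  full_frame_by Cl s L Ts v k Tf ->
  exists (j : nat) (a : 'I_K), [/\ (j < 2)%N, exists t, inslot v k j t,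
    forall t, inslot v k j t -> inframe u a t & forall t, inslot v k j t -> t <= Tf].
Proof.
move=> started HK [_ full].
have slot_full j t : (j < 2)%N -> inslot v k j t -> Ts <= t /\ t <= Tf.
  by move=> j2 /(inslot_inframe HL (ltn_trans j2 (ltnSn 2))) /full.
have [j [a [j2 [t tslot] slot_a]]] := inslot_within_inframe Hdelta Hclock HL
  (fun j t j2 tslot => le_trans (started u) (slot_full j t j2 tslot).1).
have aK : (a < K)%N by apply: (HK u a t (slot_a t tslot)); exact: (slot_full j t j2 tslot).2.
exists j, (Ordinal aK); split => //; first by exists t.
by move=> t' /(slot_full j t' j2) [].
Qed.

Lemma odd_eq_ltn_gap k1 k2 : odd k1 = odd k2 -> (k1 < k2)%N -> (k1 + 2 <= k2)%N.
Proof.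
move=> par k12; have : k2 != k1.+1 by apply: contra_eqN par => /eqP-> /=; case: odd.
lia.
Qed.

(* Frames of the same parity are at least two frames apart, so the slots
   chosen in them meet disjoint sets of frames: the success events are
   independent. *)
Lemma Pr_not_received_le u v Ts Tf (ks : seq nat) (b : bool) :
  link A nb v u -> uniq ks -> {in ks, forall k, odd k = b} ->
  {in ks, forall k, full_frame_by Cl s L Ts v k Tf} ->
  (forall y, s y <= Ts) ->
  (forall y k t, inframe y k t -> t <= Tf -> (k < K)%N) ->
  Pr (fun w : outc => ~ received A nb Cl s L w u v Tf) <= (1 - rho R A nb / (6 * maxSD)) ^+ size ks.
Proof.
move=> luv uks par full started HK.
case: ks => [|kh kt] in uks par full *; first by rewrite expr0 (Pr_le1 R Dest HA).
set ks := kh :: kt in uks par full *.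
have kK k : k \in ks -> (k < K)%N by case/full => -[t tk] /(_ t tk) [_]; exact: HK tk.
pose i0 : 'I_K := Ordinal (kK kh (mem_head _ _)).
pose good k (p : nat * 'I_K) := [/\ (p.1 < 2)%N, exists t, inslot v k p.1 t,
  forall t, inslot v k p.1 t -> inframe u p.2 t & forall t, inslot v k p.1 t -> t <= Tf].
have [f fP] : {f : nat -> nat * 'I_K & forall k, k \in ks -> good k (f k)}.
  apply: (@choice _ _ (fun k p => k \in ks -> good k p)) => k.
  have [/full/(full_frame_good_slot u started HK)[j [a ?]]|_] := boolP (k \in ks).
    by exists (j, a).
  by exists (0%N, i0).
pose o k : 'I_K := insubd i0 k; pose D k := slot_frames v k (f k).1.
have o_k k : k \in ks -> val (o k) = k by move=> kks; rewrite val_insubd kK.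
have D_vo k : k \in ks -> (v, o k) \in D k.
  move=> kks; have [j2 [t tslot] _ _] := fP k kks.
  rewrite inE; apply/asboolP; exists t; split => //=.
  by rewrite o_k //; apply: (inslot_inframe HL (ltn_trans j2 (ltnSn 2))).
have D_ua k : k \in ks -> (u, (f k).2) \in D k.
  move=> kks; have [_ [t tslot] slot_a _] := fP k kks.
  by rewrite inE; apply/asboolP; exists t; split => //; apply: slot_a.
apply: (le_trans (le_Pr R A Dest (F := fun w => forall k, k \in ks ->
  ~ success u v (o k) (f k).2 (D k) w) _)); last apply: (Pr_none_indep HA (D := D) uks).
- move=> w notrec k kks succ; apply: notrec; have [j2 ? slot_a slotTf] := fP k kks.
  exact: (success_received (o_k k kks) (ltn_trans j2 (ltnSn 2)) _ slotTf slot_a succ).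
- by move=> k kks w w' ww'; apply: success_local; [exact: D_vo | exact: D_ua |].
- move=> k1 k2 k1ks k2ks k12; apply/pred0P => -[y c] /=; apply/negbTE/negP => /andP[].
  rewrite !inE => /asboolP[t1 [s1 f1]] /asboolP[t2 [s2 f2]].
  have [j1 _ _ _] := fP k1 k1ks; have [j2 _ _ _] := fP k2 k2ks.
  have par12 : odd k1 = odd k2 by rewrite !par.
  case: (ltngtP k1 k2) => [lt12|lt21|eq12]; last by rewrite eq12 eqxx in k12.
    exact: (inslot_two_apart_inframe Hdelta Hclock HL (odd_eq_ltn_gap par12 lt12) j1 s1 f1 s2 f2).
  exact: (inslot_two_apart_inframe Hdelta Hclock HL (odd_eq_ltn_gap (esym par12) lt21) j2 s2 f2 s1 f1).
- by move=> k _; apply: Pr_success_ge => //; apply: card_slot_frames.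
Qed.

Lemma Pr_not_received_link u v Ts Tf (sq : seq nat) :
  link A nb v u -> uniq sq -> {in sq, forall k, full_frame_by Cl s L Ts v k Tf} ->
  (forall y, s y <= Ts) ->
  (forall y k t, inframe y k t -> t <= Tf -> (k < K)%N) ->
  exists n : nat, (size sq <= 2 * n)%N /\
    Pr (fun w : outc => ~ received A nb Cl s L w u v Tf) <= (1 - rho R A nb / (6 * maxSD)) ^+ n.
Proof.
move=> luv usq full started HK.
have [b half] : exists b : bool, (size sq <= 2 * count (fun k => odd k == b) sq)%N.
  have := count_predC odd sq.
  have -> : count (predC odd) sq = count (fun k => odd k == false) sq.
    by apply: eq_count => k; rewrite eqbF_neg.
  have -> : count odd sq = count (fun k => odd k == true) sq.
    by apply: eq_count => k; rewrite eqb_id.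
  by case: (leqP (count (fun k => odd k == true) sq) (count (fun k => odd k == false) sq))
    => ? ?; [exists false | exists true]; lia.
exists (count (fun k => odd k == b) sq); split => //; rewrite -size_filter.
apply: (Pr_not_received_le (b := b)) started HK => //; first exact: filter_uniq.
  by move=> k; rewrite mem_filter => /andP[/eqP].
by move=> k; rewrite mem_filter => /andP[_ /full].
Qed.

End Discovery.

Lemma rho_gt0 (R : realType) (V C : finType) (A : V -> {set C}) (nb : rel V) :
  (forall u, A u != set0) -> 0 < rho R A nb.
Proof.
move=> HA; apply: (big_ind (fun x : R => 0 < x)) => // [x y x0 y0|[v u] /=].
  by rewrite lt_min x0 y0.
case/existsP => c /and3P[_ cAu cAv]; rewrite divr_gt0 // ltr0n card_gt0 ?HA //.
by apply/set0Pn; exists c; rewrite inE cAu cAv.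
Qed.

Lemma expn1B_le_inv (R : realType) (q x : R) (n : nat) :
  0 <= q <= 1 -> 1 <= x -> ln x <= n%:R * q -> (1 - q) ^+ n <= x^-1.
Proof.
move=> /andP[q0 q1] x1 lnx_le.
apply: (@le_trans _ _ (expR (- q) ^+ n)).
  by rewrite lerXn2r ?nnegrE ?expR_ge0 ?subr_ge0 //; have := expR_ge1Dx (- q); lra.
rewrite -expRM_natl -[x in _ <= x^-1](@lnK _ x) -?expRN ?ler_expR ?posrE; lra.
Qed.

Lemma sum_pairs_le (R : realType) (T : finType) (P : pred (T * T)) (f : T * T -> R)
    (eps : R) :
  0 <= eps -> (forall p, P p -> f p <= eps / #|T|%:R ^+ 2) -> \sum_(p | P p) f p <= eps.
Proof.
move=> eps0 fle; apply: le_trans (ler_sum _ fle) _; rewrite sumr_const.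
have [->|T0] := posnP #|T|; first by rewrite expr2 mulr0n mul0r invr0 mulr0 mul0rn.
apply: le_trans (ler_wpMn2l _ (max_card _)) _; first by rewrite divr_ge0 ?exprn_ge0.
rewrite card_prod -(mulr_natr (eps / _)) natrM -expr2 divfK //.
by rewrite expf_neq0 // pnatr_eq0 -lt0n.
Qed.

Theorem mainTheorem6
  (R : realType) (V C : finType) (A : V -> {set C}) (nb : rel V)
  (HA : forall u, A u != set0)
  (Hsym : forall u v, nb u v = nb v u)
  (Hirr : forall u, ~~ nb u u)
  (Dest : nat) (HDest : (0 < Dest)%N)
  (HDelta : forall u c, c \in A u -> (deg A nb u c <= Dest)%N)
  (delta : R) (Hdelta : delta <= 1 / 7)
  (Cl : V -> R -> R)
  (Hclock : forall u (t dt : R), 0 <= dt ->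
      (1 - delta) * dt <= Cl u (t + dt) - Cl u t <= (1 + delta) * dt)
  (s : V -> R) (L : R) (HL : 0 < L)
  (eps : R) (Heps0 : 0 < eps) (Heps1 : eps < 1)
  (Ts : R) (HTs1 : forall u, s u <= Ts) (HTs2 : exists u, s u = Ts)
  (M : R)
  (HM : M = 48 * Num.max (2 * (Smax A)%:R) (3 * Dest%:R) / rho R A nb
            * ln ((#|V|)%:R ^+ 2 / eps))
  (Tf : R)
  (HTf1 : forall u, executed Cl s L Ts M u Tf)
  (HTf2 : forall T, T < Tf -> exists u, ~ executed Cl s L Ts M u T)
  (K : nat)
  (HK : forall u k t, inframe Cl s L u k t -> t <= Tf -> (k < K)%N) :
  1 - eps <= Pr R A Dest (fun w : outcome V C K => all_discovered A nb Cl s L w Tf).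
Proof.
set N := #|V|; set x := N%:R ^+ 2 / eps; set q := rho R A nb / (6 * maxSD R A Dest).
have rho0 := rho_gt0 R nb HA; have rho1 : rho R A nb <= 1 := bigmin_le_id _ _ _ _.
have D1 : 1 <= Dest%:R :> R by rewrite ler1n.
have maxSD3 : 3 <= maxSD R A Dest by have := maxSD_ge R A Dest; lra.
have q01 : 0 <= q <= 1 by rewrite /q divr_ge0 ?ler_pdivrMr ?ltW //=; lra.
have link_le u v : link A nb v u ->
    Pr R A Dest (fun w : outcome V C K => ~ received A nb Cl s L w u v Tf) <= eps / N%:R ^+ 2.
  move=> luv; have [sq [usq Msq full]] := HTf1 v.
  have [n [sqn Pn]] := Pr_not_received_link HA Hirr HDest HDelta Hdelta Hclock HL luv usq full HTs1 HK.
  have N1 : 1 <= N%:R :> R by rewrite ler1n; apply/card_gt0P; exists u.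
  have x1 : 1 <= x by rewrite /x ler_pdivlMr // mul1r (le_trans (ltW Heps1)) // expr_ge1.
  apply: le_trans Pn _; rewrite -[eps / _]invf_div; apply: expn1B_le_inv => //.
  have : q * M = 8 * ln x by rewrite HM /q /maxSD; field; rewrite !lt0r_neq0 // -/(maxSD R A Dest); lra.
  have : M <= 2 * n%:R by rewrite (le_trans Msq) // -natrM ler_nat.
  have := ln_ge0 x1; case/andP: q01 => q0 _; rewrite -/q; nra.
have union_le := Pr_union_bound R Dest HA (fun p : V * V => link A nb p.2 p.1)
  (fun p (w : outcome V C K) => received A nb Cl s L w p.1 p.2 Tf).
apply: le_trans (le_trans union_le (le_Pr _ _ _ _)) => [|w all u v luv]; last first.
  exact: (all (u, v)).
by rewrite lerB // sum_pairs_le // ?ltW // => -[u v]; apply: link_le.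
Qed.
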